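(* Let $A$ be a commutative ring, $E$ a non-zero $A$-module and $R=A\propto E$ the trivial ring extension of $A$ by $E$. Then $R$ is a chain ring if and only if $A$ is a valuation domain and $E$ is a uniserial divisible $A$-module.
   Context: All rings are commutative with identity. The trivial ring extension $R=A\propto E$ is the ring with underlying additive group $A\times E$ and multiplication $(a,e)(a',e')=(aa',ae'+a'e)$. A module is uniserial if its submodules are totally ordered by inclusion; a ring is a chain ring if it is uniserial as a module over itself. A module $E$ over a domain $A$ is divisible if $aE=E$ for every non-zero $a\in A$. *)

From HB Require Import structures.
From mathcomp Require Import all_boot all_order all_algebra.
Set Implicit Arguments. Unset Strict Implicit. Unset Printing Implicit Defensive.
Import Order.TTheory GRing.Theory.
Local Open Scope ring_scope.

Definition submodule (R : comNzRingType) (M : lmodType R) (S : pred M) : Prop :=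
  [/\ 0 \in S,
      (forall x y, x \in S -> y \in S -> x + y \in S) &
      (forall (r : R) x, x \in S -> r *: x \in S)].

Definition uniserial (R : comNzRingType) (M : lmodType R) : Prop :=
  forall S T : pred M, submodule S -> submodule T ->
    {subset S <= T} \/ {subset T <= S}.

Definition chain_ring (R : comNzRingType) : Prop := uniserial R^o.

Definition is_domain (R : comNzRingType) : Prop :=
  (1 : R) != 0 /\ forall a b : R, a * b = 0 -> a = 0 \/ b = 0.

Definition valuation_domain (R : comNzRingType) : Prop :=
  is_domain R /\ forall a b : R, (exists c, b = c * a) \/ (exists c, a = c * b).

Definition divisible (R : comNzRingType) (M : lmodType R) : Prop :=
  forall (a : R), a != 0 -> forall e : M, exists e' : M, e = a *: e'.

Definition triv_ext (A : comNzRingType) (E : lmodType A) : Type := (A * E)%type.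

Section TrivExt.
Variables (A : comNzRingType) (E : lmodType A).

HB.instance Definition _ := GRing.Zmodule.on (triv_ext E).

Definition te_one : triv_ext E := (1, 0).
Definition te_mul (x y : triv_ext E) : triv_ext E :=
  (x.1 * y.1, x.1 *: y.2 + y.1 *: x.2).

Lemma te_mulA : associative te_mul.
Proof.
case=> a e [b f] [c g]; rewrite /te_mul /=; congr pair; first by rewrite mulrA.
rewrite !scalerDr !scalerA addrA; congr (_ + _ + _); by rewrite mulrC.
Qed.

Lemma te_mulC : commutative te_mul.
Proof. by case=> a e [b f]; rewrite /te_mul /= mulrC addrC. Qed.

Lemma te_mul1 : left_id te_one te_mul.
Proof. by case=> a e; rewrite /te_mul /= mul1r scale1r scaler0 addr0. Qed.

Lemma te_mulDl : left_distributive te_mul +%R.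
Proof.
case=> a e [b f] [c g]; rewrite /te_mul /=; congr pair; first by rewrite mulrDl.
rewrite scalerDl scalerDr; rewrite -!addrA; congr (_ + _).
by rewrite addrCA.
Qed.

Lemma te_one_neq0 : te_one != 0.
Proof. by apply/negP => /eqP [] /eqP; rewrite oner_eq0. Qed.

HB.instance Definition _ := GRing.Zmodule_isComNzRing.Build (triv_ext E)
  te_mulA te_mulC te_mul1 te_mulDl te_one_neq0.

Lemma te_mulE (x y : triv_ext E) :
  x * y = ((x.1 * y.1 : A), x.1 *: y.2 + y.1 *: x.2) :> triv_ext E.
Proof. by []. Qed.

End TrivExt.

(* A chain ring is one in which any two elements are comparable under
   divisibility. Comparing (0, e) with (a, 0) in A ∝ E shows that E is
   divisible, and a divisible non-zero module forces A to be a domain;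
   comparing (a, 0) with (b, 0), resp. (0, e) with (0, f), gives the chain
   conditions on A and on E. Conversely, if b divides a in the valuation
   domain A with b != 0, divisibility of E lets us correct the E-component,
   so (b, f) divides (a, e); when both A-components vanish we compare in E. *)

From HB Require Import structures.
From mathcomp Require Import all_boot all_order all_algebra.
From mathcomp Require Import boolp.
Set Implicit Arguments. Unset Strict Implicit. Unset Printing Implicit Defensive.
Import GRing.Theory.
Local Open Scope ring_scope.

Definition cyclic_chain (R : comNzRingType) (M : lmodType R) : Prop :=
  forall x y : M, (exists r : R, x = r *: y) \/ (exists r : R, y = r *: x).

Section Uniserial.
Variables (R : comNzRingType) (M : lmodType R).

Definition cyclic_submodule (y : M) : pred M :=
  fun z => `[< exists r : R, z = r *: y >].

Lemma cyclic_submoduleP (y z : M) :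
  reflect (exists r : R, z = r *: y) (z \in cyclic_submodule y).
Proof. exact: asboolP. Qed.

Lemma cyclic_submodule_id (y : M) : y \in cyclic_submodule y.
Proof. by apply/cyclic_submoduleP; exists 1; rewrite scale1r. Qed.

Lemma submodule_cyclic (y : M) : submodule (cyclic_submodule y).
Proof.
split.
- by apply/cyclic_submoduleP; exists 0; rewrite scale0r.
- move=> _ _ /cyclic_submoduleP[r ->] /cyclic_submoduleP[s ->].
  by apply/cyclic_submoduleP; exists (r + s); rewrite scalerDl.
- move=> r _ /cyclic_submoduleP[s ->].
  by apply/cyclic_submoduleP; exists (r * s); rewrite scalerA.
Qed.

Lemma uniserialE : uniserial M <-> cyclic_chain M.
Proof.
split=> [U x y | C S T [_ _ SZ] [_ _ TZ]].
  have [sub_xy|sub_yx] := U _ _ (submodule_cyclic x) (submodule_cyclic y).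
    by left; apply/cyclic_submoduleP/sub_xy/cyclic_submodule_id.
  by right; apply/cyclic_submoduleP/sub_yx/cyclic_submodule_id.
have [|] := pselect {subset S <= T}; first by left.
move=> /existsNP[x /not_implyP[Sx Tx]]; right=> y Ty.
have [[r xy]|[r ->]] := C x y; last exact: SZ.
by case: Tx; rewrite xy; apply: TZ.
Qed.

End Uniserial.

Lemma chain_ringE (R : comNzRingType) :
  chain_ring R <->
  forall x y : R, (exists r, x = r * y) \/ (exists r, y = r * x).
Proof. exact: uniserialE. Qed.

Lemma divisible_is_domain (A : comNzRingType) (E : lmodType A) :
  (exists e : E, e != 0) -> divisible E -> is_domain A.
Proof.
move=> [e e_neq0] divE; split=> [|a b ab0]; first exact: oner_neq0.
have [->|a_neq0] := eqVneq a 0; first by left.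
have [->|b_neq0] := eqVneq b 0; first by right.
move: e_neq0; have [f ->] := divE a a_neq0 e; have [g ->] := divE b b_neq0 f.
by rewrite scalerA ab0 scale0r eqxx.
Qed.

Section TrivExtChain.
Variables (A : comNzRingType) (E : lmodType A).
Implicit Types (a b : A) (e f : E) (r : triv_ext E).

Lemma te_mul_scalar r a :
  r * ((a, 0) : triv_ext E) = (r.1 * a, a *: r.2) :> triv_ext E.
Proof. by rewrite te_mulE scaler0 add0r. Qed.

Lemma te_mul_vector r e :
  r * ((0, e) : triv_ext E) = (0, r.1 *: e) :> triv_ext E.
Proof. by rewrite te_mulE mulr0 scale0r addr0. Qed.

Hypothesis chainR : chain_ring (triv_ext E).

Lemma chain_triv_ext_divisible : divisible E.
Proof.
move=> a a_neq0 e; have [[r]|[r]] := (chain_ringE _).1 chainR (0, e) (a, 0).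
  by rewrite te_mul_scalar => -[_ ->]; exists r.2.
by rewrite te_mul_vector => -[a0 _]; rewrite a0 eqxx in a_neq0.
Qed.

Lemma chain_triv_ext_dvd_total a b :
  (exists c, b = c * a) \/ (exists c, a = c * b).
Proof.
have [[r]|[r]] := (chain_ringE _).1 chainR (a, 0) (b, 0).
  by rewrite te_mul_scalar => -[-> _]; right; exists r.1.
by rewrite te_mul_scalar => -[-> _]; left; exists r.1.
Qed.

Lemma chain_triv_ext_uniserial : uniserial E.
Proof.
apply/uniserialE=> e f.
have [[r]|[r]] := (chain_ringE _).1 chainR (0, e) (0, f).
  by rewrite te_mul_vector => -[->]; left; exists r.1.
by rewrite te_mul_vector => -[->]; right; exists r.1.
Qed.

End TrivExtChain.

Section ChainTrivExt.
Variables (A : comNzRingType) (E : lmodType A).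
Hypotheses (divE : divisible E) (uniE : uniserial E).

(* The E-component e - c f is absorbed by dividing it by b. *)
Lemma triv_ext_dvd a b c e f : b != 0 -> a = c * b ->
  exists r : triv_ext E, ((a, e) : triv_ext E) = r * (b, f).
Proof.
move=> b_neq0 ->; have [g Hg] := divE b_neq0 (e - c *: f).
by exists (c, g); rewrite te_mulE /= -Hg addrC subrK.
Qed.

Lemma triv_ext_dvd_total_vector e f :
  (exists r : triv_ext E, ((0, e) : triv_ext E) = r * (0, f)) \/
  (exists r : triv_ext E, ((0, f) : triv_ext E) = r * (0, e)).
Proof.
have [[s ->]|[s ->]] := (uniserialE E).1 uniE e f.
  by left; exists (s, 0); rewrite te_mul_vector.
by right; exists (s, 0); rewrite te_mul_vector.
Qed.

Lemma valuation_triv_ext_chain : valuation_domain A -> chain_ring (triv_ext E).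
Proof.
move=> [_ dvdA]; apply/chain_ringE=> -[a e] [b f].
have [[c ba]|[c ab]] := dvdA a b.
  have [a0|a_neq0] := eqVneq a 0; last by right; exact: triv_ext_dvd ba.
  by move: ba; rewrite a0 mulr0 => ->; exact: triv_ext_dvd_total_vector.
have [b0|b_neq0] := eqVneq b 0; last by left; exact: triv_ext_dvd ab.
by move: ab; rewrite b0 mulr0 => ->; exact: triv_ext_dvd_total_vector.
Qed.

End ChainTrivExt.

Theorem proposition1p1 (A : comNzRingType) (E : lmodType A) :
  (exists e : E, e != 0) ->
  (chain_ring (triv_ext E) <->
   valuation_domain A /\ uniserial E /\ divisible E).
Proof.
move=> E_neq0; split=> [chainR | [valA [uniE divE]]].
  have divE := chain_triv_ext_divisible chainR.
  have domA := divisible_is_domain E_neq0 divE.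
  have dvdA := chain_triv_ext_dvd_total chainR.
  by do !split => //; exact: chain_triv_ext_uniserial.
exact: (valuation_triv_ext_chain divE uniE).
Qed.
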